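(* The string rewriting system $\mathcal{F}=D_F\cup A\cup B$ is terminating, where $D_F=\{1_3\rhd\to\rhd,\ 0_30_2\rhd\to 0_3\rhd,\ 1_30_2\rhd\to1_3\rhd,\ 1_31_2\rhd\to1_32_3\rhd,\ 2_31_2\rhd\to2_32_3\rhd\}$.
   Context: An SRS induces $u\ell v\to urv$ for each rule $\ell\to r$; terminating means no infinite rewrite sequence. Alphabet $\{0_2,1_2,0_3,1_3,2_3,\lhd,\rhd\}$; $A=\{0_20_3\to0_30_2,\ 0_21_3\to0_31_2,\ 0_22_3\to1_30_2,\ 1_20_3\to1_31_2,\ 1_21_3\to2_30_2,\ 1_22_3\to2_31_2\}$; $B=\{\lhd0_3\to\lhd1_2,\ \lhd1_3\to\lhd0_20_2,\ \lhd2_3\to\lhd0_21_2\}$. *)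

From Stdlib Require Import List.
Import ListNotations.

Inductive sym : Type :=
| z2 | o2
| z3 | o3 | t3
| lt (* left end marker  <| *) | rt (* right end marker |> *).

Definition word := list sym.

Definition srs := list (word * word).

Definition rewrite_step (R : srs) (s t : word) : Prop :=
  exists u v l r, In (l, r) R /\ s = u ++ l ++ v /\ t = u ++ r ++ v.

Definition terminating (R : srs) : Prop :=
  ~ exists f : nat -> word, forall n, rewrite_step R (f n) (f (S n)).

Definition A_rules : srs :=
  [ ([z2; z3], [z3; z2]);
    ([z2; o3], [z3; o2]);
    ([z2; t3], [o3; z2]);
    ([o2; z3], [o3; o2]);
    ([o2; o3], [t3; z2]);
    ([o2; t3], [t3; o2]) ].

Definition B_rules : srs :=
  [ ([lt; z3], [lt; o2]);
    ([lt; o3], [lt; z2; z2]);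
    ([lt; t3], [lt; z2; o2]) ].

Definition DF_rules : srs :=
  [ ([o3; rt], [rt]);
    ([z3; z2; rt], [z3; rt]);
    ([o3; z2; rt], [o3; rt]);
    ([o3; o2; rt], [o3; t3; rt]);
    ([t3; o2; rt], [t3; t3; rt]) ].

Definition F_rules : srs := DF_rules ++ A_rules ++ B_rules.

From Stdlib Require Import List Arith Lia ConstructiveEpsilon.
From Stdlib Require Import Relation_Operators Lexicographic_Product.
Import ListNotations.

(* Termination of F = D_F ∪ A ∪ B by a lexicographic measure built from four weights.

   A block ◁ x ▷, with x a string of binary and ternary digits, encodes the number
   val(x) read in mixed radix starting from 1.  The rules simulate the map
   col n = n/3 (n ≡ 1 mod 3), n/2 (n even), (3n+1)/2 (otherwise): D_F performs a col
   step at ▷, A and B only rewrite the digits without changing the value.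

   1. col reaches {0,1} from every n (every n ≥ 2 reaches a smaller number, via the
      2-adic valuation of n+1), so the stopping time [steps n] exists, and it drops
      along every col step from n ≥ 2.
   2. Each weight is computed by a left-to-right automaton adding a cost per letter:
      (i) sum of the stopping times of the closed blocks, (ii) binary digits outside
      blocks before a ▷, (iii) ternary digits, (iv) binary–ternary inversions.
      The first three share one register automaton, whose state every rule preserves;
      by additivity, a rule decreasing the weights locally decreases them in any context.
   3. Every rule of F decreases the 4-tuple lexicographically, which is well founded. *)

Definition col (n : nat) : nat :=
  if n mod 3 =? 1 then n / 3 else if n mod 2 =? 0 then n / 2 else (3 * n + 1) / 2.

Lemma euclid (n d : nat) : 0 < d -> n = d * (n / d) + n mod d /\ n mod d < d.
Proof.
  intros Hd. split; [apply Nat.div_mod_eq | apply Nat.mod_upper_bound; lia].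
Qed.

Lemma col_third (q : nat) : col (3 * q + 1) = q.
Proof.
  unfold col. destruct (euclid (3 * q + 1) 3) as [E3 B3]; [lia |].
  destruct (Nat.eqb_spec ((3 * q + 1) mod 3) 1); lia.
Qed.

Lemma col_half (q : nat) : (forall p, 2 * q <> 3 * p + 1) -> col (2 * q) = q.
Proof.
  intros Hq. unfold col.
  destruct (euclid (2 * q) 3) as [E3 B3]; [lia |].
  destruct (euclid (2 * q) 2) as [E2 B2]; [lia |].
  destruct (Nat.eqb_spec ((2 * q) mod 3) 1) as [H3 | _];
    [exfalso; apply (Hq (2 * q / 3)); lia |].
  destruct (Nat.eqb_spec ((2 * q) mod 2) 0); lia.
Qed.

Lemma col_odd (q : nat) : (forall p, 2 * q + 1 <> 3 * p + 1) -> col (2 * q + 1) = 3 * q + 2.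
Proof.
  intros Hq. unfold col.
  destruct (euclid (2 * q + 1) 3) as [E3 B3]; [lia |].
  destruct (euclid (2 * q + 1) 2) as [E2 B2]; [lia |].
  destruct (euclid (3 * (2 * q + 1) + 1) 2) as [E B]; [lia |].
  destruct (Nat.eqb_spec ((2 * q + 1) mod 3) 1) as [H3 | _];
    [exfalso; apply (Hq ((2 * q + 1) / 3)); lia |].
  destruct (Nat.eqb_spec ((2 * q + 1) mod 2) 0); lia.
Qed.

Definition reaches (n m : nat) : Prop := exists k, Nat.iter k col n = m.

Lemma reaches_col (n m : nat) : col n = m -> reaches n m.
Proof. intros H. exists 1. exact H. Qed.

Lemma reaches_trans (n m p : nat) : reaches n m -> reaches m p -> reaches n p.
Proof.
  intros [j Hj] [k Hk]. exists (k + j). rewrite Nat.iter_add, Hj. exact Hk.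
Qed.

Lemma two_adic (n : nat) : 1 <= n -> exists a m, n = 2 ^ a * (2 * m + 1).
Proof.
  induction n as [n IH] using (well_founded_induction lt_wf). intros Hn.
  destruct (Nat.Even_or_Odd n) as [[p Hp] | [p Hp]].
  - destruct (IH p ltac:(lia) ltac:(lia)) as [a [m Ha]].
    exists (S a), m. simpl. lia.
  - exists 0, p. simpl. lia.
Qed.

(* Along odd numbers ≡ 2 (mod 3), each step trades a factor 2 of n+1 for a factor 3. *)
Lemma climb (j c : nat) : 1 <= c -> reaches (3 * (2 ^ j * c) - 1) (3 ^ (S j) * c - 1).
Proof.
  revert c. induction j as [| j IH]; intros c Hc.
  - exists 0. simpl. lia.
  - assert (Hpow : 2 ^ j <> 0) by (apply Nat.pow_nonzero; lia).
    set (P := 2 ^ j * c).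
    assert (HP : 1 <= P) by (unfold P; nia).
    replace (3 * (2 ^ S j * c) - 1) with (2 * (3 * P - 1) + 1) by (unfold P; simpl; lia).
    eapply reaches_trans; [apply reaches_col, col_odd; lia |].
    replace (3 * (3 * P - 1) + 2) with (3 * (2 ^ j * (3 * c)) - 1) by (unfold P; lia).
    replace (3 ^ S (S j) * c - 1) with (3 ^ S j * (3 * c) - 1) by (simpl; lia).
    apply IH. lia.
Qed.

(* Conversely, from y ≡ 1 (mod 3) each step divides 2y+1 by 3. *)
Lemma descend (j y m : nat) : 2 * y + 1 = 3 ^ j * (2 * m + 1) -> reaches y m.
Proof.
  revert y. induction j as [| j IH]; intros y Hy.
  - exists 0. simpl in *. lia.
  - set (Z := 3 ^ j * (2 * m + 1)) in *.
    assert (HZ : 2 * y + 1 = 3 * Z) by (unfold Z in *; simpl in Hy; lia).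
    destruct (Nat.Even_or_Odd Z) as [[q Hq] | [q Hq]]; [lia |].
    replace y with (3 * q + 1) by lia.
    eapply reaches_trans; [apply reaches_col, col_third |].
    apply IH. fold Z. lia.
Qed.

Lemma odd_times_power_3 (j m : nat) : exists w, 3 ^ j * (2 * m + 1) = 2 * w + 1.
Proof.
  induction j as [| j [w Hw]]; [exists m; simpl; lia |].
  exists (3 * w + 1). simpl. lia.
Qed.

(* Every n ≥ 2 reaches a smaller number: directly if n ≡ 1 (mod 3) or n is even;
   otherwise, with n+1 = 2^(j+1)(2m+1), the orbit climbs to 3^(j+1)(2m+1) - 1, halves,
   and descends to m. *)
Lemma descent (n : nat) : 2 <= n -> exists m, m < n /\ reaches n m.
Proof.
  intros Hn. destruct (euclid n 3) as [E3 B3]; [lia |].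
  destruct (Nat.eq_dec (n mod 3) 1) as [H1 | H1].
  { set (q := n / 3) in *. exists q. split; [lia |].
    apply reaches_col. replace n with (3 * q + 1) by lia. apply col_third. }
  destruct (Nat.Even_or_Odd n) as [[q Hq] | [q Hq]].
  { exists q. split; [lia |]. subst n.
    apply reaches_col, col_half. lia. }
  destruct (two_adic (n + 1)) as [[| j] [m Hm]]; [lia | simpl in Hm; lia |].
  assert (Hpow : 2 ^ j <> 0) by (apply Nat.pow_nonzero; lia).
  rewrite Nat.pow_succ_r' in Hm.
  set (c := 2 ^ j * (2 * m + 1)) in *.
  assert (Hc : 2 * m + 1 <= c) by (unfold c; nia).
  exists m. split; [lia |].
  assert (Hodd : col n = 3 * c - 1).
  { subst n. rewrite col_odd by lia. lia. }
  destruct (odd_times_power_3 (S j) m) as [w Hw].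
  eapply reaches_trans; [apply reaches_col, Hodd |].
  eapply reaches_trans; [apply climb; lia |]. rewrite Hw.
  replace (2 * w + 1 - 1) with (2 * w) by lia.
  eapply reaches_trans; [apply reaches_col, col_half; simpl in Hw; lia |].
  apply (descend (S j)). lia.
Qed.

Lemma col_converges (n : nat) : exists k, Nat.iter k col n <= 1.
Proof.
  induction n as [n IH] using (well_founded_induction lt_wf).
  destruct (Nat.le_gt_cases n 1) as [Hn | Hn]; [exists 0; exact Hn |].
  destruct (descent n Hn) as [m [Hlt [j Hj]]].
  destruct (IH m Hlt) as [k Hk].
  exists (k + j). rewrite Nat.iter_add, Hj. exact Hk.
Qed.

Definition settles (n k : nat) : Prop := Nat.iter k col n <= 1.

Definition steps (n : nat) : nat :=
  proj1_sig (epsilon_smallest (settles n) (fun k => le_dec _ 1) (col_converges n)).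

Lemma steps_spec (n : nat) : settles n (steps n) /\ forall k, settles n k -> steps n <= k.
Proof. unfold steps. destruct epsilon_smallest as [k Hk]. exact Hk. Qed.

Lemma steps_col (n m : nat) : 2 <= n -> col n = m -> steps m < steps n.
Proof.
  intros Hn Hm. destruct (steps_spec n) as [Hsettle _].
  destruct (steps_spec m) as [_ Hleast].
  destruct (steps n) as [| k]; unfold settles in Hsettle; [simpl in Hsettle; lia |].
  rewrite Nat.iter_succ_r, Hm in Hsettle.
  specialize (Hleast k Hsettle). lia.
Qed.

Section Meter.
Variable S : Type.
Variable next : sym -> S -> S.

Fixpoint final (s : S) (w : word) : S :=
  match w with [] => s | c :: w' => final (next c s) w' end.

Fixpoint weight (cost : sym -> S -> nat) (s : S) (w : word) : nat :=
  match w with [] => 0 | c :: w' => cost c s + weight cost (next c s) w' end.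

Lemma weight_app (cost : sym -> S -> nat) (s : S) (u v : word) :
  weight cost s (u ++ v) = weight cost s u + weight cost (final s u) v.
Proof. revert s. induction u as [| c u IH]; intros s; simpl; [reflexivity | rewrite IH; lia]. Qed.
End Meter.
Arguments final {S}.
Arguments weight {S}.

Definition is_binary (c : sym) : bool := match c with z2 | o2 => true | _ => false end.
Definition is_ternary (c : sym) : bool := match c with z3 | o3 | t3 => true | _ => false end.

(* The register automaton: whether we are inside a block ◁…▷, the mixed-radix value of
   the digits read since the last end marker (starting from 1), and the number of
   binary digits read outside blocks since the last ▷. *)
Record register := Reg { inside : bool; value : nat; loose_bits : nat }.

Definition reg_next (c : sym) (s : register) : register :=
  let bits := if inside s then loose_bits s else S (loose_bits s) in
  match c with
  | lt => Reg true 1 0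
  | rt => Reg false 1 0
  | z2 => Reg (inside s) (2 * value s) bits
  | o2 => Reg (inside s) (2 * value s + 1) bits
  | z3 => Reg (inside s) (3 * value s) (loose_bits s)
  | o3 => Reg (inside s) (3 * value s + 1) (loose_bits s)
  | t3 => Reg (inside s) (3 * value s + 2) (loose_bits s)
  end.

Definition reg_start : register := Reg false 1 0.

Definition steps_cost (c : sym) (s : register) : nat :=
  match c with rt => if inside s then steps (value s) else 0 | _ => 0 end.
Definition loose_cost (c : sym) (s : register) : nat :=
  match c with rt => if inside s then 0 else loose_bits s | _ => 0 end.
Definition ternary_cost (c : sym) (_ : register) : nat := if is_ternary c then 1 else 0.

Definition bits_next (c : sym) (b : nat) : nat := if is_binary c then S b else b.
Definition inversion_cost (c : sym) (b : nat) : nat := if is_ternary c then b else 0.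

(* Reachable register values are positive; [D_F] needs this to have values ≥ 2. *)
Lemma value_positive (s : register) (w : word) : 1 <= value s -> 1 <= value (final reg_next s w).
Proof.
  revert s. induction w as [| c w IH]; intros s Hs; simpl; [exact Hs |].
  apply IH. destruct c; simpl; lia.
Qed.

Definition triple : Type := nat * (nat * nat).
Definition add3 (x y : triple) : triple :=
  (fst x + fst y, (fst (snd x) + fst (snd y), snd (snd x) + snd (snd y))).

Definition tally (s : register) (w : word) : triple :=
  (weight reg_next steps_cost s w,
   (weight reg_next loose_cost s w, weight reg_next ternary_cost s w)).

Lemma tally_app (s : register) (u v : word) :
  tally s (u ++ v) = add3 (tally s u) (tally (final reg_next s u) v).
Proof. unfold tally, add3. simpl. rewrite !weight_app. reflexivity. Qed.

Definition lex3 : triple -> triple -> Prop :=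
  slexprod nat (nat * nat) Peano.lt (slexprod nat nat Peano.lt Peano.lt).

Definition lex4 : triple * nat -> triple * nat -> Prop := slexprod triple nat lex3 Peano.lt.

Lemma lex4_wf : well_founded lex4.
Proof. repeat apply wf_slexprod; exact lt_wf. Qed.

Lemma lex3_first (a a' : nat) (x x' : nat * nat) : a' < a -> lex3 (a', x') (a, x).
Proof. intros H. now apply left_slex. Qed.

Lemma lex3_second (a a' b b' c c' : nat) : a' = a -> b' < b -> lex3 (a', (b', c')) (a, (b, c)).
Proof. intros -> H. now apply right_slex, left_slex. Qed.

Lemma lex3_third (a a' b b' c c' : nat) :
  a' = a -> b' = b -> c' < c -> lex3 (a', (b', c')) (a, (b, c)).
Proof. intros -> -> H. now apply right_slex, right_slex. Qed.

Lemma lex3_add (p q x y : triple) : lex3 x y -> lex3 (add3 p (add3 x q)) (add3 p (add3 y q)).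
Proof.
  destruct p as [p1 [p2 p3]], q as [q1 [q2 q3]].
  intros H. unfold add3.
  inversion H as [x1 y1 x23 y23 H1 | x1 x23 y23 H23]; subst; simpl.
  - apply lex3_first. lia.
  - inversion H23; subst; simpl; [apply lex3_second | apply lex3_third]; lia.
Qed.

Definition measure (w : word) : triple * nat :=
  (tally reg_start w, weight bits_next inversion_cost 0 w).

Definition rule_decreases (l r : word) : Prop :=
  forall (s : register) (b : nat), 1 <= value s ->
    final reg_next s r = final reg_next s l /\
    (lex3 (tally s r) (tally s l) \/
     (tally s r = tally s l /\ final bits_next b r = final bits_next b l /\
      weight bits_next inversion_cost b r < weight bits_next inversion_cost b l)).

Lemma rewrite_decreases (R : srs) (x y : word) :
  (forall l r, In (l, r) R -> rule_decreases l r) ->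
  rewrite_step R x y -> lex4 (measure y) (measure x).
Proof.
  intros Hrules [u [v [l [r [Hin [-> ->]]]]]].
  set (s := final reg_next reg_start u). set (b := final bits_next 0 u).
  destruct (Hrules l r Hin s b (value_positive reg_start u (le_n 1)))
    as [Hfinal [Hlex | [Htally [Hbits Hinv]]]];
  unfold measure; rewrite !tally_app, !weight_app;
  fold s b; rewrite Hfinal.
  - apply left_slex, lex3_add, Hlex.
  - rewrite Htally, Hbits. apply right_slex. lia.
Qed.

(* Inside a block the rules of [DF_rules] perform one step of [col] on the value of
   the block, so its stopping time drops; outside a block they delete a loose binary
   digit or a ternary digit. *)
Lemma DF_decrease (l r : word) : In (l, r) DF_rules -> rule_decreases l r.
Proof.
  intros Hin [[|] N k] b HN; simpl in HN;
  repeat (destruct Hin as [Hin | Hin]; [injection Hin as <- <- | ]); try contradiction;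
  split; try reflexivity; left; unfold tally; cbn -[Nat.mul Nat.add steps].
  all: try (apply lex3_first; rewrite ?Nat.add_0_r; apply steps_col; [lia |]).
  all: first [ apply col_third | apply col_half; intros p; lia | apply col_odd; intros p; lia
             | apply lex3_second; lia | apply lex3_third; lia ].
Qed.

(* The rules of [A_rules] commute a binary digit past a ternary digit without changing
   the value; they only remove one inversion. *)
Lemma A_decrease (l r : word) : In (l, r) A_rules -> rule_decreases l r.
Proof.
  intros Hin [i N k] b _;
  repeat (destruct Hin as [Hin | Hin]; [injection Hin as <- <- | ]); try contradiction;
  (split; [cbn -[Nat.mul Nat.add]; f_equal; lia |]);
  right; (split; [reflexivity | split; cbn -[Nat.mul Nat.add]; lia]).
Qed.

(* The rules of [B_rules] rewrite the leading ternary digit of a block into binary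
   digits of the same value; the number of ternary digits drops. *)
Lemma B_decrease (l r : word) : In (l, r) B_rules -> rule_decreases l r.
Proof.
  intros Hin s b _;
  repeat (destruct Hin as [Hin | Hin]; [injection Hin as <- <- | ]); try contradiction;
  split; try reflexivity; left; unfold tally; cbn -[Nat.mul Nat.add steps].
  all: apply lex3_third; lia.
Qed.

Lemma F_decrease (l r : word) : In (l, r) F_rules -> rule_decreases l r.
Proof.
  unfold F_rules. intros Hin.
  destruct (in_app_or _ _ _ Hin) as [H | H]; [now apply DF_decrease |].
  destruct (in_app_or _ _ _ H) as [H' | H']; [now apply A_decrease | now apply B_decrease].
Qed.

Lemma no_infinite_descent (A : Type) (R : A -> A -> Prop) (g : nat -> A) :
  well_founded R -> ~ (forall n, R (g (S n)) (g n)).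
Proof.
  intros Hwf Hg.
  assert (Hacc : forall a, Acc R a -> forall n, g n <> a).
  { intros a Ha. induction Ha as [a _ IH]. intros n Hn.
    refine (IH (g (S n)) _ (S n) eq_refl). rewrite <- Hn. apply Hg. }
  exact (Hacc (g 0) (Hwf (g 0)) 0 eq_refl).
Qed.

Theorem mainTheorem11 : terminating F_rules.
Proof.
  intros [g Hg].
  apply (no_infinite_descent _ lex4 (fun n => measure (g n)) lex4_wf).
  intros n. apply (rewrite_decreases F_rules); [exact F_decrease | apply Hg].
Qed.
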